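(* Let $\mathcal{H}$ be a handle structure for a compact surface $S$ and let $C$ be a standard 1-manifold properly embedded in $S$. Then the number of pairings in its associated pairing system (equivalently, the total number of parallelism classes of arcs of $C$ in the 0-handles and 1-handles, each handle viewed as a polygon) is at most $9|\mathcal{H}^1|+2\,\mathrm{simp}(C)\le 9\|\mathcal{H}\|+2\,\mathrm{simp}(C)$.
   Context: A handle structure $\mathcal{H}$ decomposes $S$ into 0-, 1- and 2-handles; $\mathcal{H}^i$ is the union of the $i$-handles, $|\mathcal{H}^1|$ is the number of 1-handles and $\|\mathcal{H}\|$ the total number of handles. Each handle is viewed as a polygon whose sides are the components of its intersections with other handles and with $\partial S$. A properly embedded 1-manifold $C$ is standard if it meets each 0-handle in properly embedded arcs, each 1-handle in properly embedded arcs respecting the product structure and parallel to the core, and is disjoint from the 2-handles. Arcs of $C$ in a polygon are parallel if they cobound a square in the polygon meeting the boundary in two arcs, avoiding vertices, and meeting $C$ only in arcs parallel to them; a pairing system has one pairing per parallelism class. A simplifying disc for $C$ is a disc $D$ in a 0-handle $H_0$ with $\partial D=\alpha\cup\beta$, $\alpha=D\cap C$, $\beta=D\cap\partial H_0$, where $\beta$ meets $\mathcal{H}^1$ in at most one arc and $\partial S$ in at most one arc; it is boundary-simplifying if it meets $\partial S$, interior-simplifying otherwise. $\mathrm{simp}(C)$ is the number of boundary-simplifying discs plus twice the number of interior-simplifying discs. *)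

From mathcomp Require Import all_boot.

Unset Strict Implicit.
Unset Printing Implicit Defensive.

(* The kind of a side of a handle (viewed as a polygon):
   KAtt h e : the side is the attaching arc of end e of the 1-handle h,
   KBdry    : the side lies in boundary S,
   KTwo     : the side is an arc of intersection with a 2-handle. *)
Inductive kind (n1 : nat) : Type := KAtt of 'I_n1 & bool | KBdry | KTwo.
Arguments KAtt {n1}.
Arguments KBdry {n1}.
Arguments KTwo {n1}.

Definition is_att {n1} (k : kind n1) : bool := if k is KAtt _ _ then true else false.
Definition is_bdry {n1} (k : kind n1) : bool := if k is KBdry then true else false.
Definition is_two {n1} (k : kind n1) : bool := if k is KTwo then true else false.
Definition is_att_of {n1} (h : 'I_n1) (e : bool) (k : kind n1) : bool :=
  if k is KAtt h' e' then (h' == h) && (e' == e) else false.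

(* A polygon carrying arcs of C.
   ks : cyclic list of sides (kinds); cs : number of points of C on each side.
   Points of C on the boundary are numbered 0 .. npts cs - 1 in cyclic order,
   side 0 first; consecutive sides are separated by a vertex (a polygon with a
   single side has no vertex: its side is the whole boundary circle).
   m : the matching, m p = other endpoint of the arc of C starting at p. *)

Definition npts (cs : seq nat) : nat := sumn cs.

Definition side_of (cs : seq nat) (p : nat) : nat :=
  find (fun s => p < sumn (take s.+1 cs)) (iota 0 (size cs)).

Definition fwd (N x y : nat) : seq nat :=
  [seq q <- iota 0 N | if x < y then (x < q) && (q < y) else (x < q) || (q < y)].

(* the closed boundary arc from point x forward to point y contains no vertex *)
Definition vtx_free (cs : seq nat) (x y : nat) : bool :=
  (size cs <= 1) || ((x < y) && (side_of cs x == side_of cs y)).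

(* the arcs through points a and b are parallel: they cobound a square whose
   intersection with the boundary is two arcs (from u to v, and from v' to u')
   avoiding vertices, and which meets C only in arcs running across it *)
Definition parallel (cs : seq nat) (m : nat -> nat) (a b : nat) : bool :=
  let N := npts cs in
  has (fun u => has (fun v =>
     let u' := m u in let v' := m v in
     [&& v \in fwd N u u', v' \in fwd N v u', vtx_free cs u v, vtx_free cs v' u',
         all (fun p => m p \in fwd N v' u') (fwd N u v) &
         all (fun p => m p \in fwd N u v) (fwd N v' u')]) [:: b; m b]) [:: a; m a].

(* number of parallelism classes of arcs (each arc represented by its smaller
   endpoint); a class is a connected component of the parallelism relation *)
Definition par_classes (cs : seq nat) (m : nat -> nat) : nat :=
  let N := npts cs in
  let A := fun p : 'I_N => val p < m (val p) in
  let r := fun p q : 'I_N => [&& A p, A q & parallel cs m (val p) (val q)] in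
  #|[set [set q | A q && connect r p q] | p in [pred p | A p]]|.

(* sides visited (with multiplicity, one per component) by the boundary arc
   from point u forward to point u' *)
Definition visits (cs : seq nat) (u u' : nat) : seq nat :=
  let k := size cs in let s := side_of cs u in let s' := side_of cs u' in
  if (k <= 1) || ((u < u') && (s == s')) then [:: s] else
  let d := if s == s' then k else (s' + k - s) %% k in
  [seq (s + i) %% k | i <- iota 0 d.+1].

(* the disc D cut off by the arc from u to m u on the forward side
   (beta = boundary arc from u forward to m u): 0 if it is not simplifying,
   1 if boundary-simplifying, 2 if interior-simplifying *)
Definition simp_weight {n1} (ks : seq (kind n1)) (cs : seq nat) (m : nat -> nat)
    (u : nat) : nat :=
  let vs := [seq nth KTwo ks i | i <- visits cs u (m u)] in
  let na := count is_att vs in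
  let nb := count is_bdry vs in
  if [&& fwd (npts cs) u (m u) == [::], na <= 1 & nb <= 1]
  then (if nb == 1 then 1 else 2) else 0.

Definition simp_poly {n1} (ks : seq (kind n1)) (cs : seq nat) (m : nat -> nat) : nat :=
  \sum_(u < npts cs) simp_weight ks cs m u.

(* well-formed arcs in a polygon: disjoint from 2-handle sides, m a fixed point
   free involution of the points, arcs pairwise disjoint (non-crossing) *)
Definition wf_poly {n1} (ks : seq (kind n1)) (cs : seq nat) (m : nat -> nat) : bool :=
  let N := npts cs in
  [&& size cs == size ks,
      all (fun i => is_two (nth KTwo ks i) ==> (nth 0 cs i == 0)) (iota 0 (size ks)),
      all (fun p => [&& m p < N, m p != p & m (m p) == p]) (iota 0 N) &
      all (fun a => all (fun b => (b \in fwd N a (m a)) ==> (m b \in fwd N a (m a)))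
                        (iota 0 N)) (iota 0 N)].

(* Handle structures.  h0 lists the 0-handles, each as the cyclic list of its
   sides; h1free h gives, for the 1-handle h, whether each of its two free
   sides lies in boundary S (true) or in a 2-handle (false). *)
Record handle_structure := HS {
  nH1 : nat;
  nH2 : nat;
  h0 : seq (seq (kind nH1));
  h1free : 'I_nH1 -> bool * bool }.

Definition nH0 (H : handle_structure) : nat := size (h0 H).
Definition hnorm (H : handle_structure) : nat := nH0 H + nH1 H + nH2 H.

(* boundary of a 0-handle: attaching arcs of 1-handles alternate with free
   arcs (in boundary S or in a 2-handle), or the whole circle is one free side *)
Definition alternating {n1} (ks : seq (kind n1)) : bool :=
  ((size ks == 1) && ~~ is_att (nth KTwo ks 0)) ||
  [&& 0 < size ks, ~~ odd (size ks) &
      all (fun i => is_att (nth KTwo ks i) == ~~ odd i) (iota 0 (size ks))].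

Definition wf_handle (H : handle_structure) : bool :=
  all alternating (h0 H) &&
  [forall h : 'I_(nH1 H), forall e : bool,
     sumn [seq count (is_att_of h e) ks | ks <- h0 H] == 1].

(* A 1-manifold in standard position: for the 0-handle j, cnt j gives the
   number of points of C on each side and cm j the matching of these points by
   the arcs of C in that 0-handle. *)
Record mfd := Mfd { cnt : nat -> seq nat; cm : nat -> nat -> nat }.

(* number of points of C on the attaching arc of end e of the 1-handle h *)
Definition strands (H : handle_structure) (C : mfd) (h : 'I_(nH1 H)) (e : bool) : nat :=
  sumn [seq \sum_(i < size (nth [::] (h0 H) j))
            (if is_att_of h e (nth KTwo (nth [::] (h0 H) j) i)
             then nth 0 (cnt C j) i else 0) | j <- iota 0 (nH0 H)].

Definition standard (H : handle_structure) (C : mfd) : bool :=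
  all (fun j => wf_poly (nth [::] (h0 H) j) (cnt C j) (cm C j)) (iota 0 (nH0 H)) &&
  [forall h : 'I_(nH1 H), strands H C h false == strands H C h true].

(* the 1-handle h as a polygon: end false, free side, end true, free side;
   its arcs run parallel to the core *)
Definition h1_kinds (H : handle_structure) (h : 'I_(nH1 H)) : seq (kind (nH1 H)) :=
  let fr := fun b : bool => (if b then KBdry else KTwo : kind (nH1 H)) in
  [:: KAtt h false; fr (h1free H h).1; KAtt h true; fr (h1free H h).2].
Definition h1_cnt (H : handle_structure) (C : mfd) (h : 'I_(nH1 H)) : seq nat :=
  let n := strands H C h false in [:: n; 0; n; 0].
Definition h1_match (H : handle_structure) (C : mfd) (h : 'I_(nH1 H)) : nat -> nat :=
  fun p => (2 * strands H C h false).-1 - p.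

Definition pairings (H : handle_structure) (C : mfd) : nat :=
  \sum_(j < nH0 H) par_classes (cnt C j) (cm C j) +
  \sum_(h < nH1 H) par_classes (h1_cnt H C h) (h1_match H C h).

Definition simp (H : handle_structure) (C : mfd) : nat :=
  \sum_(j < nH0 H) simp_poly (nth [::] (h0 H) j) (cnt C j) (cm C j).

From mathcomp Require Import all_boot zify.

(* Number the points of C on the boundary of a polygon 0, ..., N-1 and index
   each arc by its smaller endpoint.  If the arc at p.+1 ends at (m p).-1 and
   neither boundary gap contains a vertex, the arcs at p and p.+1 are parallel,
   so there are at most as many parallelism classes as class ends, the arcs p
   for which this fails.  A class end whose successor runs alongside it (or
   which is innermost) is stopped by a vertex or is innermost: it is charged to
   a change of side or to a simplifying disc.  Otherwise it branches, and
   m p.+1 is a position where a closing endpoint is followed by an opening one;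
   these are no more numerous than the opening-closing positions, each of which
   is again an innermost arc or a change of side.  A 0-handle thus carries at
   most 2 simp + 4 (number of attaching sides) classes, every end of a 1-handle
   is attached once, and a 1-handle carries a single class. *)

Lemma mem_fwd N x y q : (q \in fwd N x y) =
  (q < N) && (if x < y then (x < q) && (q < y) else (x < q) || (q < y)).
Proof. by rewrite /fwd mem_filter mem_iota add0n /= andbC. Qed.

Lemma fwd_succ N x : fwd N x x.+1 = [::].
Proof.
rewrite /fwd -(filter_pred0 (iota 0 N)); apply: eq_filter => q.
rewrite ltnSn /=; lia.
Qed.

Lemma iota0S n : iota 0 n.+1 = iota 0 n ++ [:: n].
Proof. by rewrite -addn1 iotaD. Qed.

Lemma sub_in_count {T : eqType} (a1 a2 : pred T) s :
  {in s, forall x, a1 x -> a2 x} -> count a1 s <= count a2 s.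
Proof.
elim: s => [//|x s IH] h /=; apply: leq_add.
  by case ax: (a1 x) => //; rewrite h // inE eqxx.
by apply: IH => y ys; apply: h; rewrite inE ys orbT.
Qed.

Lemma count_predIC {T : Type} (a b : pred T) s :
  count (predI a b) s + count (predI a (predC b)) s = count a s.
Proof. by elim: s => //= x s <-; case: (a x); case: (b x) => /=; lia. Qed.

Lemma count_le_inj (P Q : pred nat) (f : nat -> nat) n k :
  {in [pred x | (x < n) && P x] &, injective f} ->
  (forall x, x < n -> P x -> (f x < k) && Q (f x)) ->
  count P (iota 0 n) <= count Q (iota 0 k).
Proof.
move=> inj hf; rewrite -!size_filter -(size_map f); apply: uniq_leq_size.
- rewrite map_inj_in_uniq ?filter_uniq ?iota_uniq //.
  move=> x y; rewrite !mem_filter !mem_iota /= => /andP[Px xn] /andP[Py yn].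
  by apply: inj; rewrite inE /= ?Px ?Py; [move: xn|move: yn]; rewrite add0n => ->.
- move=> y /mapP [x]; rewrite mem_filter mem_iota => /andP[Px xn] ->.
  rewrite add0n in xn; case/andP: (hf x xn Px) => h1 h2.
  by rewrite mem_filter mem_iota h2 add0n h1.
Qed.

Lemma count_iota_predn (P : pred nat) n :
  count (fun j => (j.+1 < n) && P j) (iota 0 n) = count P (iota 0 n.-1).
Proof.
case: n => [//|n]; rewrite iota0S count_cat /= ltnn !addn0.
by apply: eq_in_count => x; rewrite mem_iota add0n /= ltnS => ->.
Qed.

Lemma count_rise_fall (l : nat -> bool) k :
  count (fun j => ~~ l j && l j.+1) (iota 0 k) + l 0 =
  count (fun j => l j && ~~ l j.+1) (iota 0 k) + l k.
Proof.
elim: k => [//|k IH]; rewrite iota0S !count_cat /= !addn0.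
by move: IH; case: (l k); case: (l k.+1) => /=; lia.
Qed.

Lemma count_steps_le (f : nat -> nat) k : (forall i, f i <= f i.+1) ->
  count (fun j => f j != f j.+1) (iota 0 k) <= f k - f 0.
Proof.
move=> hf; elim: k => [|k IH]; first by rewrite /=; lia.
rewrite iota0S count_cat /= addn0.
have : f 0 <= f k by elim: (k) => [//|j IHj]; exact: leq_trans IHj (hf j).
by have := hf k; case: eqP => /= e; lia.
Qed.

Lemma count_even_iota n : 2 * count (fun i => ~~ odd i) (iota 0 n) = n + odd n.
Proof.
elim: n => [//|n IH]; rewrite iota0S count_cat /= addn0 mulnDr IH.
by case: (odd n) => /=; lia.
Qed.

Lemma card_ord_count N (P : pred nat) :
  #|[set p : 'I_N | P (val p)]| = count P (iota 0 N).
Proof.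
by rewrite cardsE cardE /enum_mem size_filter -val_enum_ord count_map enumT.
Qed.

Section Matching.

Variables (cs : seq nat) (m : nat -> nat).
Local Notation N := (npts cs).

Hypothesis m_lt : forall {p}, p < N -> m p < N.
Hypothesis m_neq : forall {p}, p < N -> m p != p.
Hypothesis m_inv : forall {p}, p < N -> m (m p) = p.
Hypothesis m_nested :
  forall {a b}, a < N -> a < m a -> a < b -> b < m a -> a < m b < m a.

Definition par_next p :=
  [&& p.+1 < N, p.+1 < (m p).-1, m p.+1 == (m p).-1,
      vtx_free cs p p.+1 & vtx_free cs (m p).-1 (m p)].

Definition class_end p := (p < m p) && ~~ par_next p.

Lemma parallel_next {p} : p < m p -> par_next p ->
  parallel cs m p p.+1 && parallel cs m p.+1 p.
Proof.
move=> lt /and5P[h1 h2 /eqP h3 v1 v2].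
have mpN : m p < N by apply: m_lt; lia.
have mmp : m (m p) = p by apply: m_inv; lia.
have mm1 : m (m p).-1 = p.+1 by rewrite -h3 m_inv.
have e1 := fwd_succ N p.
have e2 : fwd N (m p).-1 (m p) = [::] by case: (m p) h2 => // q _; exact: fwd_succ.
apply/andP; split.
- apply/hasP; exists p; first by rewrite inE eqxx.
  apply/hasP; exists p.+1; first by rewrite inE eqxx.
  rewrite /= h3 v1 v2 e1 e2 !mem_fwd /= lt.
  have -> : p.+1 < m p by lia.
  rewrite !andbT; apply/andP; split; lia.
- apply/hasP; exists (m p).-1; first by rewrite h3 !inE eqxx orbT.
  apply/hasP; exists (m p); first by rewrite !inE eqxx orbT.
  rewrite /= mm1 mmp v1 v2 e1 e2 !mem_fwd /= !andbT.
  have -> : (m p).-1 < p.+1 = false by lia.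
  have -> : m p < p.+1 = false by lia.
  apply/andP; split; lia.
Qed.

Lemma par_classes_le_ends : par_classes cs m <= count class_end (iota 0 N).
Proof.
rewrite /par_classes -card_ord_count.
set A := fun p : 'I_N => val p < m (val p).
set r := fun p q : 'I_N => [&& A p, A q & parallel cs m (val p) (val q)].
set cls := fun p : 'I_N => [set q | A q && connect r p q].
have ends_cls k (p : 'I_N) : N - p <= k -> A p ->
    exists2 q : 'I_N, class_end q & cls p = cls q.
  elim: k p => [|k IH] p hk Ap; first by have := ltn_ord p; lia.
  case hc: (par_next p); last by exists p; rewrite // /class_end hc andbT.
  have hp1 : p.+1 < N by case/and5P: hc.
  pose p' := Ordinal hp1.
  have Ap' : A p' by rewrite /A /=; case/and5P: hc => _ h2 /eqP -> _ _.
  have /andP[par1 par2] := parallel_next Ap hc.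
  have hk' : N - p' <= k by rewrite /=; lia.
  have [q Hq e] := IH p' hk' Ap'.
  exists q => //; rewrite -e; apply/setP => x; rewrite !inE; congr (A x && _).
  have r1 : r p p' by rewrite /r Ap Ap' par1.
  have r2 : r p' p by rewrite /r Ap Ap' par2.
  by apply/idP/idP => hx; [apply: connect_trans (connect1 r2) hx
                            | apply: connect_trans (connect1 r1) hx].
apply: leq_trans (leq_imset_card cls _).
apply: subset_leq_card; apply/subsetP => x /imsetP [p Ap ->].
have [q Hq ->] := ends_cls _ p (leqnn _) Ap.
by apply/imsetP; exists q; rewrite ?inE.
Qed.

Definition innermost j := (m j == j.+1) && vtx_free cs j j.+1.
Definition side_change j := (j.+1 < N) && ~~ vtx_free cs j j.+1.

Lemma nested_succ {p} : p < N -> p < m p -> m p != p.+1 -> p.+1 < m p.+1 < m p.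
Proof.
move=> hp lt ne; have mpN := m_lt hp.
have := m_nested hp lt (ltnSn p) ltac:(lia).
have := m_neq (_ : p.+1 < N); lia.
Qed.

Definition tight p := (m p == p.+1) || (m p.+1 == (m p).-1).

Definition vertex_after p := vtx_free cs p p.+1 && (m p != p.+1).

Lemma tight_end_vertex_after {p} : p < N -> class_end p -> tight p -> vertex_after p ->
  [/\ (m p).-1 < N, m (m p).-1 = p.+1, p.+1 < (m p).-1 & side_change (m p).-1].
Proof.
move=> hp /andP[lt nc] /orP ti /andP[v1 ne].
have h3 : m p.+1 = (m p).-1 by case: ti => /eqP // e; move: ne; rewrite e eqxx.
have /andP[i1 i2] := nested_succ hp lt ne.
have mpN := m_lt hp.
have e1 : m (m p).-1 = p.+1 by rewrite -h3 m_inv //; lia.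
have v2 : ~~ vtx_free cs (m p).-1 (m p).
  by apply: contra nc => v2; apply/and5P; split=> //; lia.
split; [lia | exact: e1 | lia |].
by rewrite /side_change prednK ?v2 ?andbT //; lia.
Qed.

Lemma tight_end_self {p} : p < N -> class_end p -> tight p -> ~~ vertex_after p ->
  innermost p || side_change p.
Proof.
move=> hp /andP[lt _] _; rewrite /vertex_after /innermost /side_change negb_and negbK.
have mpN := m_lt hp.
case: (eqVneq (m p) p.+1) => [e | ne]; first by case: vtx_free; rewrite ?orbT //=; lia.
have /andP[_ i2] := nested_succ hp lt ne.
by rewrite orbF => /negbTE ->; rewrite andbF /= andbT; lia.
Qed.

Lemma count_tight_ends_le :
  count (predI class_end tight) (iota 0 N) <=
  count innermost (iota 0 N) + count side_change (iota 0 N).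
Proof.
pose f p := if vertex_after p then (m p).-1 else p.
apply: leq_trans (_ : count (predU innermost side_change) (iota 0 N) <= _);
  last by rewrite -count_predUI leq_addr.
apply: (@count_le_inj _ _ f).
- move=> x y; rewrite !inE /= /f => /and3P[hx ex tx] /and3P[hy ey ty].
  have ltx : x < m x by case/andP: ex.
  have lty : y < m y by case/andP: ey.
  case: ifP => vx; case: ifP => vy.
  + have [_ mx _ _] := tight_end_vertex_after hx ex tx vx.
    have [_ my _ _] := tight_end_vertex_after hy ey ty vy.
    by move=> e; apply: succn_inj; rewrite -mx -my e.
  + have [_ mx ltx' _] := tight_end_vertex_after hx ex tx vx.
    by move=> e; move: mx ltx' lty; rewrite e => ->; lia.
  + have [_ my lty' _] := tight_end_vertex_after hy ey ty vy.
    by move=> e; move: my lty' ltx; rewrite -e => ->; lia.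
  + by [].
- move=> x hx /andP[ex tx]; rewrite /f; case: ifP => vx /=.
  + by have [-> _ _ ->] := tight_end_vertex_after hx ex tx vx; rewrite orbT.
  + by rewrite hx tight_end_self // vx.
Qed.

Definition close_open j := [&& j.+1 < N, ~~ (j < m j) & j.+1 < m j.+1].
Definition open_close j := [&& j.+1 < N, j < m j & ~~ (j.+1 < m j.+1)].

(* The arc at j.+1, j := m p.+1, lies under the arc at p; it cannot close
   inside (p.+1, j) without crossing the arc at p.+1, so it opens. *)
Lemma branching_end_close_open {p} : p < N -> class_end p -> ~~ tight p ->
  close_open (m p.+1) /\ m (m p.+1) = p.+1.
Proof.
move=> hp /andP[lt _]; rewrite /tight negb_or => /andP[ne ne'].
have /andP[i1 i2] := nested_succ hp lt ne.
have mpN := m_lt hp.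
have hp1 : p.+1 < N by lia.
have mj := m_inv hp1; split=> //.
set j := m p.+1 in i1 i2 ne' mj *.
have hj1 : j.+1 < m p by move/eqP: ne'; lia.
have hj1N : j.+1 < N by lia.
rewrite /close_open mj hj1N (_ : (j < p.+1) = false) /=; last by lia.
have := @m_nested p j.+1 hp lt ltac:(lia) hj1.
have := m_neq hj1N; have mq := m_inv hj1N.
case: (ltnP j.+1 (m j.+1)) => // hq hneq hrange.
have hqj : m j.+1 != j by apply/eqP => h; move: mq; rewrite h mj; lia.
have hqp : m j.+1 != p.+1 by apply/eqP => h; move: mq; rewrite h -/j; lia.
have := @m_nested p.+1 (m j.+1) hp1 i1 ltac:(lia) ltac:(lia).
by rewrite mq; lia.
Qed.

Lemma count_branching_ends_le :
  count (predI class_end (predC tight)) (iota 0 N) <= count close_open (iota 0 N).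
Proof.
apply: (@count_le_inj _ _ (fun p => m p.+1)).
- move=> x y; rewrite !inE /= => /and3P[hx ex tx] /and3P[hy ey ty] e.
  have [_ mx] := branching_end_close_open hx ex tx.
  have [_ my] := branching_end_close_open hy ey ty.
  by apply: succn_inj; rewrite -mx -my e.
- move=> x hx /andP[ex tx]; have [co _] := branching_end_close_open hx ex tx.
  by rewrite co andbT; case/and3P: co; lia.
Qed.

Lemma count_close_open_le :
  count close_open (iota 0 N) <= count open_close (iota 0 N).
Proof.
rewrite /close_open /open_close !count_iota_predn.
(* Telescope [j < m j] along 0, ..., N.-1: it holds at 0 and fails at N.-1. *)
have := count_rise_fall (fun j => j < m j) N.-1.
case E: N => [//|n] /=.
have := @m_lt n; have := @m_neq n; rewrite E ltnSn => /(_ isT) /eqP h1 /(_ isT) h2.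
by rewrite (_ : (n < m n) = false) //; lia.
Qed.

Lemma count_open_close_le :
  count open_close (iota 0 N) <= count innermost (iota 0 N) + count side_change (iota 0 N).
Proof.
rewrite -count_predUI; apply: leq_trans (leq_addr _ _).
apply: sub_in_count => j; rewrite mem_iota add0n /= => hj /and3P[hj1 lj nj].
have mj : m j = j.+1.
  have := m_neq hj1; case: (ltnP j.+1 (m j)) => h; last by lia.
  by have := m_nested hj lj (ltnSn j) h; lia.
by rewrite /innermost /side_change mj eqxx hj1 /=; case: vtx_free.
Qed.

Lemma count_ends_le :
  count class_end (iota 0 N) <=
  2 * count innermost (iota 0 N) + 2 * count side_change (iota 0 N).
Proof.
rewrite -(count_predIC class_end tight).
have := count_tight_ends_le; have := count_branching_ends_le.
have := count_close_open_le; have := count_open_close_le.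
lia.
Qed.

End Matching.

Lemma wf_poly_matching {n1} {ks : seq (kind n1)} {cs m} : wf_poly ks cs m ->
  [/\ forall p, p < npts cs -> m p < npts cs,
      forall p, p < npts cs -> m p != p,
      forall p, p < npts cs -> m (m p) = p &
      forall a b, a < npts cs -> a < m a -> a < b -> b < m a -> a < m b < m a].
Proof.
case/and4P => _ _ /allP inv /allP noncross.
have invP p : p < npts cs -> [&& m p < npts cs, m p != p & m (m p) == p].
  by move=> hp; apply: inv; rewrite mem_iota.
split=> [p /invP /and3P[] | p /invP /and3P[] | p /invP /and3P[_ _ /eqP] |] //.
move=> a b ha la lb lb2.
have hb : b < npts cs by case/and3P: (invP a ha) => ? _ _; lia.
have := allP (noncross a ltac:(by rewrite mem_iota)) b ltac:(by rewrite mem_iota).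
by rewrite !mem_fwd la hb lb lb2 /= => /andP[].
Qed.

Lemma simp_weight_gt0 {n1} (ks : seq (kind n1)) cs m u :
  innermost cs m u -> 0 < simp_weight ks cs m u.
Proof.
case/andP => /eqP e v; rewrite /simp_weight /visits e.
move: v; rewrite /vtx_free => ->; rewrite fwd_succ /=.
by case: is_att; case: is_bdry.
Qed.

Lemma count_innermost_le_simp {n1} (ks : seq (kind n1)) cs m :
  count (innermost cs m) (iota 0 (npts cs)) <= simp_poly ks cs m.
Proof.
rewrite -sum1_count /simp_poly -{1}(subn0 (npts cs)) big_mkord big_mkcond /=.
by apply: leq_sum => i _; case: ifP => // /(simp_weight_gt0 ks).
Qed.

Lemma alternating_size_le {n1} (ks : seq (kind n1)) : alternating ks -> 1 < size ks ->
  size ks <= 2 * count is_att ks.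
Proof.
case/orP => [/andP[/eqP -> _] //| /and3P [_ _ /allP alt]] _.
rewrite -[in count _ ks](mkseq_nth KTwo ks) /mkseq count_map.
rewrite (@eq_in_count _ _ (fun i => ~~ odd i)); last first.
  by move=> i hi; apply/eqP; apply: alt.
by rewrite count_even_iota; lia.
Qed.

Lemma side_of_leS cs i : side_of cs i <= side_of cs i.+1.
Proof. by apply: sub_find => s /= h; apply: ltn_trans h. Qed.

Lemma count_side_change_le {n1} (ks : seq (kind n1)) cs :
  size cs = size ks -> alternating ks ->
  count (side_change cs) (iota 0 (npts cs)) <= 2 * count is_att ks.
Proof.
move=> es alt; case: (leqP (size cs) 1) => hs.
  rewrite (@eq_count _ _ pred0) ?count_pred0 // => j.
  by rewrite /side_change /vtx_free hs /= andbF.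
apply: (@leq_trans (size ks)); last by apply: alternating_size_le; rewrite -?es.
rewrite -es /side_change count_iota_predn.
apply: (@leq_trans (count (fun j => side_of cs j != side_of cs j.+1)
                          (iota 0 (npts cs).-1))).
  by apply: sub_count => j; rewrite /vtx_free leqNgt hs ltnSn.
apply: leq_trans (count_steps_le _ _ (side_of_leS cs)) _.
have := find_size (fun s => (npts cs).-1 < sumn (take s.+1 cs)) (iota 0 (size cs)).
by rewrite size_iota /side_of; lia.
Qed.

Lemma par_classes_poly_le {n1} (ks : seq (kind n1)) cs m :
  wf_poly ks cs m -> alternating ks ->
  par_classes cs m <= 2 * simp_poly ks cs m + 4 * count is_att ks.
Proof.
move=> wf alt; have [m_lt m_neq m_inv m_nested] := wf_poly_matching wf.
apply: leq_trans (par_classes_le_ends cs m m_lt m_inv) _.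
apply: leq_trans (count_ends_le cs m m_lt m_neq m_inv m_nested) _.
have [/eqP es _ _ _] := and4P wf.
have := count_innermost_le_simp ks cs m; have := count_side_change_le _ _ es alt.
lia.
Qed.

Lemma side_of_h1 n q : side_of [:: n; 0; n; 0] q =
  if q < n then 0 else if q < n + n then 2 else 4.
Proof.
rewrite /side_of /= !addn0 !add0n.
case: (ltnP q n) => //= h1; case: (ltnP q (n + n)) => //= h2.
Qed.

Lemma par_classes_h1_le1 n :
  par_classes [:: n; 0; n; 0] (fun p => (2 * n).-1 - p) <= 1.
Proof.
have hN : npts [:: n; 0; n; 0] = 2 * n by rewrite /npts /=; lia.
pose m p := (2 * n).-1 - p.
have m_lt p : p < npts [:: n; 0; n; 0] -> m p < npts [:: n; 0; n; 0].
  by rewrite hN /m; lia.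
have m_inv p : p < npts [:: n; 0; n; 0] -> m (m p) = p by rewrite hN /m; lia.
apply: leq_trans (par_classes_le_ends _ _ m_lt m_inv) _; rewrite hN.
apply: leq_trans (_ : count (pred1 n.-1) (iota 0 (2 * n)) <= _); last first.
  by rewrite count_uniq_mem ?iota_uniq // leq_b1.
apply: sub_in_count => p; rewrite mem_iota add0n /= /m => hp /andP [lt nc].
apply/eqP; apply: contraNeq nc => hne.
rewrite /par_next hN /vtx_free !side_of_h1 /=.
have -> : p < n by lia.
have -> : p.+1 < n by lia.
have -> : ((2 * n).-1 - p).-1 < n = false by lia.
have -> : (2 * n).-1 - p < n = false by lia.
have -> : ((2 * n).-1 - p).-1 < n + n by lia.
have -> : (2 * n).-1 - p < n + n by lia.
by rewrite /= !andbT; apply/and3P; split; try apply/eqP; lia.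
Qed.

Lemma is_att_le_sum {n1} (x : kind n1) :
  is_att x <= \sum_(h < n1) \sum_(e : bool) is_att_of h e x.
Proof.
case: x => [h e| |] //=.
by rewrite (bigD1 h) //= (bigD1 e) //= /is_att_of !eqxx -addnA leq_addr.
Qed.

Lemma count_is_att_le {n1} (ks : seq (kind n1)) :
  count is_att ks <= \sum_(h < n1) \sum_(e : bool) count (is_att_of h e) ks.
Proof.
elim: ks => [|x ks IH] //=.
under eq_bigr => h _ do rewrite big_split.
by rewrite big_split /=; apply: leq_add (is_att_le_sum x) IH.
Qed.

Lemma count_att_le H : wf_handle H ->
  \sum_(j < nH0 H) count is_att (nth [::] (h0 H) j) <= 2 * nH1 H.
Proof.
case/andP => _ /forallP once.
have -> : \sum_(j < nH0 H) count is_att (nth [::] (h0 H) j) =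
          \sum_(ks <- h0 H) count is_att ks by rewrite (big_nth [::]) big_mkord.
apply: (@leq_trans (\sum_(ks <- h0 H) \sum_(h < nH1 H) \sum_(e : bool)
                       count (is_att_of h e) ks)).
  by apply: leq_sum => ks _; apply: count_is_att_le.
rewrite exchange_big (@leq_trans (\sum_(h < nH1 H) 2)) //;
  last by rewrite sum_nat_const card_ord mulnC.
apply: leq_sum => h _; rewrite exchange_big big_bool /=.
have /eqP e1 := forallP (once h) true; have /eqP e2 := forallP (once h) false.
by move: e1 e2; rewrite !sumnE !big_map => -> ->.
Qed.

Theorem lemma2p17 (H : handle_structure) (C : mfd) :
  wf_handle H -> standard H C ->
  pairings H C <= 9 * nH1 H + 2 * simp H C /\
  9 * nH1 H + 2 * simp H C <= 9 * hnorm H + 2 * simp H C.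
Proof.
move=> wfH /andP[/allP wfC _]; split; last by rewrite /hnorm; lia.
have /andP[/(all_nthP [::]) alt _] := wfH.
have bound0 : \sum_(j < nH0 H) par_classes (cnt C j) (cm C j) <=
    2 * simp H C + 4 * \sum_(j < nH0 H) count is_att (nth [::] (h0 H) j).
  rewrite /simp !big_distrr -big_split /=; apply: leq_sum => j _.
  by apply: par_classes_poly_le; [apply: wfC; rewrite mem_iota /= | apply: alt].
have bound1 : \sum_(h < nH1 H) par_classes (h1_cnt H C h) (h1_match H C h) <= nH1 H.
  apply: (@leq_trans (\sum_(h < nH1 H) 1)); last by rewrite sum1_card card_ord.
  by apply: leq_sum => h _; apply: par_classes_h1_le1.
have := count_att_le H wfH; rewrite /pairings; lia.
Qed.
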